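(* There exist constants $c_1,c_2,c_3>0$ and, for every integer $t\ge1$, a graph $G_t$ with $n_t$ vertices and $m_t$ edges, where $c_1t\le n_t\le c_2t$ and $c_1t^2\le m_t\le c_2t^2$, together with an LA-succinct clique cover of $G_t$ whose admissibility sets $\mathcal{A}$ satisfy $\|\mathcal{A}\|\ge c_3\,n_tm_t$. In particular $\|\mathcal{A}\|=\Theta(nm)$ can occur.
   Context: All graphs are finite, simple, undirected, with no isolated vertices; $N[v]=N(v)\cup\{v\}$ is the closed neighbourhood. A clique is a vertex set inducing a complete subgraph. $\|\mathcal{F}\|:=\sum_{F\in\mathcal{F}}|F|$. A clique cover is an indexed family of cliques covering every edge. LA-succinct construction: maintain a family $\mathcal{C}$ of cliques of $G$, initially empty; an edge is uncovered if it is contained in no member. Update rule on an uncovered edge $\{u,v\}$: (1) if some $C_\ell\in\mathcal{C}$ has $C_\ell\cup\{u,v\}$ a clique of $G$, choose exactly one such $C_\ell$ and replace it by $C_\ell\cup\{u,v\}$; (2) otherwise add a new member $\{u,v\}$ with a new label. Step (1) is always applied when applicable. An LA-succinct clique cover is a clique cover obtained from the empty family by repeatedly applying this rule to uncovered edges (in any order). For a clique cover $\{C_\ell\}_{\ell\in I}$, the admissibility sets are $A_v:=\{\ell\in I: C_\ell\subseteq N[v]\}$, $v\in V$. *)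

From mathcomp Require Import all_boot all_order all_algebra.
Set Implicit Arguments. Unset Strict Implicit. Unset Printing Implicit Defensive.

Section Graphs.
Variable V : finType.
Variable E : rel V.

Definition simple_graph : Prop := irreflexive E /\ symmetric E.
Definition no_isolated : Prop := forall v : V, exists u : V, E v u.

Definition edges : {set {set V}} := [set [set x; y] | x in V, y in V & E x y].

Definition cnbhd (v : V) : {set V} := [set u | (u == v) || E v u].

Definition is_clique (C : {set V}) : bool :=
  [forall x in C, forall y in C, (x != y) ==> E x y].

(* A family of cliques indexed by labels 0..size s - 1 *)
Definition covered (s : seq {set V}) (u v : V) : bool :=
  has (fun C : {set V} => (u \in C) && (v \in C)) s.

Definition LA_step (s s' : seq {set V}) : Prop :=
  exists u v, E u v /\ ~~ covered s u v /\
   ( (exists i, i < size s /\ is_clique (nth set0 s i :|: [set u; v]) /\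
                s' = set_nth set0 s i (nth set0 s i :|: [set u; v]))
   \/ ((forall C, C \in s -> ~~ is_clique (C :|: [set u; v])) /\
       s' = rcons s [set u; v]) ).

Inductive LA_reachable : seq {set V} -> Prop :=
  | LA_nil : LA_reachable [::]
  | LA_cons s s' : LA_reachable s -> LA_step s s' -> LA_reachable s'.

Definition clique_cover (s : seq {set V}) : Prop :=
  (forall C, C \in s -> is_clique C) /\ (forall u v, E u v -> covered s u v).

Definition LA_succinct_cover (s : seq {set V}) : Prop :=
  LA_reachable s /\ clique_cover s.

Definition adm (s : seq {set V}) (v : V) : {set 'I_(size s)} :=
  [set l : 'I_(size s) | nth set0 s l \subset cnbhd v].

Definition adm_norm (s : seq {set V}) : nat := \sum_(v : V) #|adm s v|.

End Graphs.

From mathcomp Require Import all_boot all_order all_algebra.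
From mathcomp Require Import zify.
Set Implicit Arguments. Unset Strict Implicit. Unset Printing Implicit Defensive.

(* G_t has t universal vertices and, on the remaining 2t vertices, the complete
   bipartite graph K_{t,t}; so n = 3t and t^2 <= m <= 9t^2.  A clique meets each
   side of K_{t,t} at most once, hence contains at most one of its t^2 edges and
   every clique cover has at least t^2 members.  Every clique lies in the closed
   neighbourhood of each universal vertex, so ||A|| >= t * t^2 >= n m / 27.  An
   LA-succinct cover exists because each application of the update rule covers a
   new edge. *)

Section CliqueCovers.
Variables (V : finType) (E : rel V).

Lemma clique_nonadj_eq (C : {set V}) x y :
  is_clique E C -> x \in C -> y \in C -> ~~ E x y -> x = y.
Proof.
move=> /forallP/(_ x)/implyP Cx xC yC; apply: contraNeq => nxy.
by move: (Cx xC) => /forallP/(_ y)/implyP/(_ yC)/implyP/(_ nxy).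
Qed.

Lemma card_biclique_le_cover (X Y : {set V}) s :
  {in X &, forall x x', ~~ E x x'} -> {in Y &, forall y y', ~~ E y y'} ->
  {in X & Y, forall x y, E x y} -> clique_cover E s -> #|X| * #|Y| <= size s.
Proof.
move=> indX indY EXY [cliq cov].
pose f (p : V * V) := find (fun C : {set V} => (p.1 \in C) && (p.2 \in C)) s.
have covXY p : p \in setX X Y ->
    f p < size s /\ (p.1 \in nth set0 s (f p)) && (p.2 \in nth set0 s (f p)).
  case: p => x y /setXP[xX yY]; have hasp := cov _ _ (EXY _ _ xX yY).
  by rewrite -has_find; split=> //; apply: (nth_find set0 hasp).
have f_inj : {in setX X Y &, injective f}.
  move=> [x y] [x' y'] pXY p'XY eqf.
  have [fs /andP[xC yC]] := covXY _ pXY; have [_ /andP[x'C y'C]] := covXY _ p'XY.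
  move: pXY p'XY => /setXP[xX yY] /setXP[x'X y'Y].
  have cliqC : is_clique E (nth set0 s (f (x, y))) by apply/cliq/mem_nth.
  rewrite /= -eqf in xC yC x'C y'C.
  by rewrite (clique_nonadj_eq cliqC xC x'C (indX _ _ xX x'X))
             (clique_nonadj_eq cliqC yC y'C (indY _ _ yY y'Y)).
rewrite -cardsX cardE -(size_map f) -(size_iota 0 (size s)).
apply: uniq_leq_size.
  by rewrite map_inj_in_uniq ?enum_uniq // => p q; rewrite !mem_enum; apply: f_inj.
move=> _ /mapP[p pXY ->]; rewrite mem_enum in pXY.
by rewrite mem_iota add0n; case: (covXY p pXY).
Qed.

Lemma adm_universal s u : (forall w, w != u -> E u w) -> adm E s u = setT.
Proof.
move=> univ; apply/setP => i; rewrite !inE; apply/subsetP => w _.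
by rewrite inE; case: eqVneq => //= /univ.
Qed.

Lemma adm_norm_universal s (U : {set V}) :
  {in U, forall u w, w != u -> E u w} -> #|U| * size s <= adm_norm E s.
Proof.
move=> univ; rewrite /adm_norm (bigID (mem U)) /=; apply: leq_trans (leq_addr _ _).
rewrite -sum_nat_const; apply: leq_sum => u uU.
by rewrite adm_universal ?cardsT ?card_ord //; apply: univ.
Qed.

Lemma card_edges_le : #|edges E| <= #|V| ^ 2.
Proof.
pose f (p : V * V) := [set p.1; p.2].
apply: (@leq_trans #|f @: [set: V * V]|).
  apply: subset_leq_card; apply/subsetP => _ /imset2P[x y _ _ ->].
  by apply/imsetP; exists (x, y).
by apply: leq_trans (leq_imset_card f _) _; rewrite cardsT card_prod mulnn.
Qed.

Lemma card_biclique_le_edges (X Y : {set V}) :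
  [disjoint X & Y] -> {in X & Y, forall x y, E x y} -> #|X| * #|Y| <= #|edges E|.
Proof.
move=> disXY EXY; pose f (p : V * V) := [set p.1; p.2].
have f_inj : {in setX X Y &, injective f}.
  move=> [x y] [x' y'] /setXP[xX yY] /setXP[x'X y'Y]; rewrite /f /= => eqf.
  have : x \in [set x'; y'] by rewrite -eqf set21.
  have : y \in [set x'; y'] by rewrite -eqf set22.
  rewrite !in_set2.
  have /negbTE-> : y != x' by apply: contraTneq yY => ->; rewrite (disjointFr disXY).
  have /negbTE-> : x != y' by apply: contraTneq xX => ->; rewrite (disjointFl disXY).
  by rewrite orbF /= => /eqP-> /eqP->.
rewrite -cardsX -(card_in_imset f_inj); apply: subset_leq_card.
apply/subsetP => _ /imsetP[[x y] /setXP[xX yY] ->].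
by apply/imset2P; exists x y; rewrite ?inE ?EXY.
Qed.

End CliqueCovers.

Section LASuccinct.
Variables (V : finType) (E : rel V).
Hypothesis Esym : symmetric E.

Definition uncovered (s : seq {set V}) : {set V * V} :=
  [set p | E p.1 p.2 && ~~ covered s p.1 p.2].

Definition all_cliques (s : seq {set V}) : Prop := forall C, C \in s -> is_clique E C.

Lemma clique_edge u v : E u v -> is_clique E [set u; v].
Proof.
move=> Euv; apply/forallP => x; apply/implyP => xuv; apply/forallP => y.
apply/implyP => yuv; apply/implyP.
by move: xuv yuv; rewrite !in_set2 => /orP[]/eqP-> /orP[]/eqP->; rewrite ?eqxx // Esym.
Qed.

Lemma covered_grow (s s' : seq {set V}) u v :
  size s <= size s' -> (forall k, nth set0 s k \subset nth set0 s' k) ->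
  covered s u v -> covered s' u v.
Proof.
move=> le_s sub /(has_nthP set0)[k ks /andP[uk vk]].
apply/(has_nthP set0); exists k; first exact: leq_trans ks le_s.
by rewrite !(subsetP (sub k)).
Qed.

Lemma LA_step_covers s u v : all_cliques s -> E u v -> ~~ covered s u v ->
  exists s', [/\ LA_step E s s', all_cliques s', size s <= size s',
                 (forall k, nth set0 s k \subset nth set0 s' k) & covered s' u v].
Proof.
move=> cliq Euv ncov.
have [/existsP[i cliq_i] | /existsPn no_ext] :=
  boolP [exists i : 'I_(size s), is_clique E (nth set0 s i :|: [set u; v])].
- exists (set_nth set0 s i (nth set0 s i :|: [set u; v])).
  have size_s' : size (set_nth set0 s i (nth set0 s i :|: [set u; v])) = size s.
    by rewrite size_set_nth; apply/maxn_idPr.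
  split.
  + by exists u, v; do !split => //; left; exists i.
  + move=> C /(nthP set0)[k ks <-]; rewrite nth_set_nth /=.
    by case: eqP => // _; apply/cliq/mem_nth; rewrite -size_s'.
  + by rewrite size_s'.
  + by move=> k; rewrite nth_set_nth /=; case: eqP => [->|//]; apply: subsetUl.
  + apply/(has_nthP set0); exists i; first by rewrite size_s'.
    by rewrite nth_set_nth /= eqxx !inE !eqxx !orbT.
- exists (rcons s [set u; v]); split.
  + exists u, v; do !split => //; right; split => // C Cs.
    by have := no_ext (Ordinal (etrans (index_mem C s) Cs)); rewrite /= nth_index.
  + by move=> C; rewrite mem_rcons in_cons => /orP[/eqP->|/cliq]; first exact: clique_edge.
  + by rewrite size_rcons.
  + move=> k; rewrite nth_rcons; case: ltnP => // ks.
    by rewrite nth_default ?sub0set.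
  + by rewrite /covered has_rcons !in_set2 !eqxx orbT.
Qed.

Lemma exists_LA_succinct_cover : exists s, LA_succinct_cover E s.
Proof.
suff: forall k s, LA_reachable E s -> all_cliques s -> #|uncovered s| < k ->
    exists s', LA_succinct_cover E s'.
  by move/(_ #|uncovered [::]|.+1 [::] (LA_nil E)); apply.
elim=> // k IH s reach cliq ltk.
have [unc0 | [[u v]]] := set_0Vmem (uncovered s).
- exists s; split=> //; split=> // x y Exy; apply: contraT => ncov.
  have : (x, y) \in uncovered s by rewrite inE Exy.
  by rewrite unc0 inE.
- rewrite inE /= => /andP[Euv ncov].
  have [s' [step cliq' le_s sub cov']] := LA_step_covers cliq Euv ncov.
  apply: (IH s') => //; first exact: LA_cons reach step.
  suff /proper_card : uncovered s' \proper uncovered s by move: ltk; lia.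
  apply/properP; split.
    apply/subsetP => -[x y]; rewrite !inE /= => /andP[-> ncov_xy].
    by apply: contra ncov_xy; apply: covered_grow.
  by exists (u, v); rewrite !inE /= ?Euv ?ncov ?cov'.
Qed.

End LASuccinct.

Section Example.
Variable t : nat.

(* Residue 0 mod 3: universal vertices; residues 1 and 2: the sides of K_{t,t}. *)
Definition Gt : rel 'I_(3 * t) :=
  fun i j => (i != j) && ((i %% 3 == 0) || (i %% 3 != j %% 3)).

Definition residue_class (r : nat) : {set 'I_(3 * t)} :=
  [set v : 'I_(3 * t) | v %% 3 == r].

Lemma Gt_simple : simple_graph Gt.
Proof.
split=> [i | i j]; first by rewrite /Gt eqxx.
rewrite /Gt [j == i]eq_sym; congr (_ && _).
by have [->|_] := eqVneq (i %% 3) (j %% 3); rewrite ?orbT.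
Qed.

Lemma Gt_no_isolated : 0 < t -> no_isolated Gt.
Proof.
move=> t_gt0 v; have lt1 : 1 < 3 * t by lia.
have [v0 | vn0] := eqVneq (v %% 3) 0.
  exists (Ordinal lt1); rewrite /Gt v0 andbT.
  by apply/eqP => vE; move: v0; rewrite vE.
exists (Ordinal (ltnW lt1)); rewrite /Gt (negbTE vn0) /= andbT.
by apply/eqP => vE; move: vn0; rewrite vE.
Qed.

Lemma card_residue_class r : r < 3 -> t <= #|residue_class r|.
Proof.
move=> r_lt3; have vtx_lt (j : 'I_t) : 3 * j + r < 3 * t by have := ltn_ord j; lia.
pose vtx j := Ordinal (vtx_lt j).
have vtx_inj : injective vtx by move=> i j /(congr1 val) /= ?; apply: val_inj => /=; lia.
rewrite -{1}(card_ord t) -cardsT -(card_imset _ vtx_inj); apply: subset_leq_card.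
by apply/subsetP => _ /imsetP[j _ ->]; rewrite inE /=; apply/eqP; lia.
Qed.

Lemma Gt_residue0_universal :
  {in residue_class 0, forall u w, w != u -> Gt u w}.
Proof. by move=> u; rewrite inE /Gt => /eqP-> w; rewrite eq_sym andbT. Qed.

Lemma Gt_residue_independent r :
  r != 0 -> {in residue_class r &, forall x y, ~~ Gt x y}.
Proof.
by move=> /negbTE rn0 x y; rewrite !inE /Gt => /eqP-> /eqP->; rewrite rn0 eqxx andbF.
Qed.

Lemma Gt_residue12_complete :
  {in residue_class 1 & residue_class 2, forall x y, Gt x y}.
Proof.
move=> x y; rewrite !inE /Gt => /eqP x1 /eqP y2; rewrite x1 y2 /= andbT.
by apply/eqP => xy; move: x1; rewrite xy y2.
Qed.

Lemma Gt_residue12_disjoint : [disjoint residue_class 1 & residue_class 2].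
Proof. by apply/pred0P => v; rewrite /= !inE; case: (v %% 3) => [|[|]]. Qed.

Lemma Gt_card_edges_ge : t * t <= #|edges Gt|.
Proof.
apply: leq_trans (card_biclique_le_edges Gt_residue12_disjoint Gt_residue12_complete).
by apply: leq_mul; apply: card_residue_class.
Qed.

Lemma Gt_card_edges_le : #|edges Gt| <= 9 * t ^ 2.
Proof. by apply: leq_trans (card_edges_le Gt) _; rewrite card_ord expnMn. Qed.

Lemma Gt_cover_size_ge s : clique_cover Gt s -> t * t <= size s.
Proof.
move=> cover; apply: leq_trans (card_biclique_le_cover _ _ Gt_residue12_complete cover).
  by apply: leq_mul; apply: card_residue_class.
all: exact: Gt_residue_independent.
Qed.

Lemma Gt_adm_norm_ge s : t * size s <= adm_norm Gt s.
Proof.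
apply: leq_trans (adm_norm_universal s Gt_residue0_universal).
by rewrite leq_mul2r card_residue_class ?orbT.
Qed.

End Example.

Import Order.TTheory GRing.Theory Num.Theory.
Local Open Scope ring_scope.

Theorem mainTheorem16 :
  exists c1 c2 c3 : rat, 0 < c1 /\ 0 < c2 /\ 0 < c3 /\
  forall t : nat, (1 <= t)%N ->
  exists (n : nat) (E : rel 'I_n) (s : seq {set 'I_n}),
    simple_graph E /\ no_isolated E /\
    c1 * t%:R <= n%:R <= c2 * t%:R /\
    c1 * (t ^ 2)%:R <= #|edges E|%:R <= c2 * (t ^ 2)%:R /\
    LA_succinct_cover E s /\
    c3 * (n * #|edges E|)%:R <= (adm_norm E s)%:R.
Proof.
exists 1, 9%:R, 27%:R^-1; rewrite ltr01 invr_gt0 !ltr0n; do 3!split=> //.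
move=> t t_gt0; have [s cover] := exists_LA_succinct_cover (proj2 (Gt_simple t)).
exists (3 * t)%N, (@Gt t), s; split; first exact: Gt_simple.
split; first exact: Gt_no_isolated t_gt0.
have m_ge := Gt_card_edges_ge t; have m_le := Gt_card_edges_le t.
have size_ge := Gt_cover_size_ge (proj2 cover); have adm_ge := Gt_adm_norm_ge s.
rewrite !mul1r -!natrM !ler_nat ler_pdivrMl ?ltr0n; last by [].
rewrite -natrM ler_nat.
by split; [lia | split; [lia | split=> //; nia]].
Qed.
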